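(* Let $m,\ell\ge 2$. If $\sigma_1\in\mathcal{S}_{m,1}^{1\prec m}(1324)$ and $\sigma_2\in\mathcal{S}_{\ell,k}^{1\prec \ell}(1324)$ for some $k\ge1$, then $\sigma_1\odot\sigma_2\in\mathcal{S}_{n,k+1}^{1\prec n}(1324)$, where $n=\ell+m-1$.
   Context: $\mathcal{S}_n(1324)$ denotes the set of permutations of $\{1,\dots,n\}$ (in one-line notation) avoiding the pattern $1324$. For $a,k\ge1$, $\mathcal{S}_{n,k}^{a\prec n}(1324)$ is the set of $\sigma\in\mathcal{S}_n(1324)$ with $\sigma^{-1}(n)-\sigma^{-1}(a)=k$ and $\sigma^{-1}(b)>\sigma^{-1}(n)$ for all $b\in\{1,\dots,a-1\}$. Elements of $\mathcal{S}_{m,1}^{1\prec m}(1324)$ are called primitives; such a permutation has the form $\sigma_1=\pi_1\,1\,m\,\tau_1$ with words $\pi_1,\tau_1$ (possibly empty). Given a primitive $\sigma_1=\pi_1\,1\,m\,\tau_1$ of size $m$ and a permutation $\sigma_2\in\mathcal{S}_\ell(1324)$ of the form $\sigma_2=\pi_2\,1\,\theta_2\,\ell\,\tau_2$ (words $\pi_2,\theta_2,\tau_2$ possibly empty, so $1$ is to the left of $\ell$), the product is $\sigma_1\odot\sigma_2=\widehat{\pi}_2\,\pi_1\,1\,m\,\widehat{\theta}_2\,n\,\widehat{\tau}_2\,\tau_1$, where $n=\ell+m-1$ and $\widehat{\pi}_2,\widehat{\theta}_2,\widehat{\tau}_2$ are obtained from $\pi_2,\theta_2,\tau_2$ by adding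 $m-1$ to each entry. For example $2143\odot 41253=7214586 3$. *)

From mathcomp Require Import all_boot.
Set Implicit Arguments. Unset Strict Implicit. Unset Printing Implicit Defensive.

Definition is_perm (n : nat) (s : seq nat) : bool := perm_eq s (iota 1 n).

Definition avoids1324 (s : seq nat) : Prop :=
  ~ exists i j k l, [/\ i < j, j < k, k < l & l < size s] /\
      [/\ nth 0 s i < nth 0 s k, nth 0 s k < nth 0 s j & nth 0 s j < nth 0 s l].

Definition S1324 (n : nat) (s : seq nat) : Prop := is_perm n s /\ avoids1324 s.

(* Positions (0-based; only differences/comparisons matter). *)
Definition pos (x : nat) (s : seq nat) : nat := index x s.

(* S_{n,k}^{a < n}(1324): sigma^{-1}(n) - sigma^{-1}(a) = k (k >= 1 in use) and
   every b in {1,...,a-1} lies to the right of n. *)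
Definition S_prec (n k a : nat) (s : seq nat) : Prop :=
  [/\ S1324 n s,
      (pos n s = pos a s + k)%N &
      forall b, 1 <= b < a -> pos n s < pos b s].

(* The product sigma1 (.) sigma2 with m = size sigma1, l = size sigma2.
   sigma1 = pi1 1 m tau1,  sigma2 = pi2 1 theta2 l tau2. *)
Definition odot (s1 s2 : seq nat) : seq nat :=
  let m := size s1 in
  let l := size s2 in
  let n := (l + m - 1)%N in
  let pi1 := take (pos 1 s1) s1 in
  let tau1 := drop (pos 1 s1).+2 s1 in
  let pi2 := take (pos 1 s2) s2 in
  let theta2 := drop (pos 1 s2).+1 (take (pos l s2) s2) in
  let tau2 := drop (pos l s2).+1 s2 in
  let hat := map (addn (m - 1)) in
  hat pi2 ++ pi1 ++ [:: 1; m] ++ hat theta2 ++ [:: n] ++ hat tau2 ++ tau1.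

Example odot_ex : odot [:: 2; 1; 4; 3] [:: 4; 1; 2; 5; 3] = [:: 7; 2; 1; 4; 5; 8; 6; 3].
Proof. by []. Qed.

From mathcomp Require Import all_boot zify.

(* In sigma1 (.) sigma2 the entries <= m, read from left to right, spell sigma1,
   and the entries >= m spell sigma2 shifted by m - 1.  Moreover, on each side of
   m all entries larger than m precede all entries smaller than m.  Hence an
   occurrence a c b d of 1324 either lies in one of these two subsequences, or
   has a < m < d and straddles m; then either a c b followed by m is an
   occurrence among the entries <= m, or m followed by c b d is one among the
   entries >= m. *)

Definition pattern1324_at (s : seq nat) i j k l :=
  [/\ i < j, j < k, k < l & l < size s] /\
  [/\ nth 0 s i < nth 0 s k, nth 0 s k < nth 0 s j & nth 0 s j < nth 0 s l].

Lemma nth_filter_count {T : Type} (x0 : T) (p : pred T) s i :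
  i < size s -> p (nth x0 s i) -> nth x0 (filter p s) (count p (take i s)) = nth x0 s i.
Proof.
elim: s i => [|x s IHs] [|i] //= lt_i_s pi; first by rewrite pi.
by case: (p x); rewrite /= ?add0n IHs.
Qed.

Lemma count_take_ltn {T : Type} (x0 : T) (p : pred T) s i j :
  i < j -> i < size s -> p (nth x0 s i) -> count p (take i s) < count p (take j s).
Proof.
move=> lt_ij lt_i_s pi; rewrite -(subnKC (ltnW lt_ij)) takeD count_cat (drop_nth x0 lt_i_s).
have -> : j - i = (j - i).-1.+1 by lia.
by rewrite /= pi; lia.
Qed.

Lemma pattern1324_filter (p : pred nat) {s i j k l} : pattern1324_at s i j k l ->
  p (nth 0 s i) -> p (nth 0 s j) -> p (nth 0 s k) -> p (nth 0 s l) ->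
  ~ avoids1324 (filter p s).
Proof.
move=> [[ij jk kl ls] vals] pi pj pk pl; apply.
exists (count p (take i s)), (count p (take j s)), (count p (take k s)), (count p (take l s)).
rewrite !nth_filter_count; try lia; split=> //; split; last rewrite size_filter -{2}(take_size s).
all: by apply: (count_take_ltn 0) => //; lia.
Qed.

Lemma avoids1324_map_addn c s : avoids1324 s -> avoids1324 (map (addn c) s).
Proof.
move=> avoid [i [j [k [l [[ij jk kl]]]]]]; rewrite size_map => ls.
rewrite !(nth_map 0 0); try lia; move=> [ik kj jl]; apply: avoid.
by exists i, j, k, l; split; split=> //; lia.
Qed.

Definition high_then_low (m : nat) (X : seq nat) : Prop :=
  exists U V, X = U ++ V /\ all (fun x => m < x) U && all (fun x => x < m) V.

Lemma high_then_low_nth m X : high_then_low m X ->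
  exists c, forall p, p < size X -> (m < nth 0 X p <-> p < c) /\ nth 0 X p != m.
Proof.
move=> [U [V [-> /andP[hiU loV]]]]; exists (size U) => p; rewrite size_cat nth_cat => pUV.
have [pU | Up] := ltnP p (size U).
  by have /= := allP hiU _ (mem_nth 0 pU); lia.
have pV : p - size U < size V by lia.
by have /= := allP loV _ (mem_nth 0 pV); lia.
Qed.

Lemma avoids1324_high_low m X Y : high_then_low m X -> high_then_low m Y ->
  avoids1324 [seq x <- X ++ m :: Y | x <= m] ->
  avoids1324 [seq x <- X ++ m :: Y | m <= x] -> avoids1324 (X ++ m :: Y).
Proof.
move=> /high_then_low_nth[cX hX] /high_then_low_nth[cY hY] lo hi [i [j [k [l pat]]]].
set r := X ++ m :: Y in lo hi pat.
have rX : nth 0 r (size X) = m by rewrite nth_cat ltnn subnn.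
have sideL p : p < size X -> (m < nth 0 r p <-> p < cX) /\ nth 0 r p != m.
  by move=> pX; rewrite nth_cat pX; apply: hX.
have sideR p : size X < p < size r ->
    (m < nth 0 r p <-> p < size X + cY.+1) /\ nth 0 r p != m.
  move=> /andP[Xp pr]; rewrite nth_cat (ltnNge p) (ltnW Xp) /=.
  have -> : p - size X = (p - (size X).+1).+1 by lia.
  by have := hY (p - (size X).+1); rewrite size_cat /= in pr *; lia.
have [[ij jk kl lr] [ik kj jl]] := pat.
have [d_le_m | m_lt_d] := leqP (nth 0 r l) m.
  by apply: (pattern1324_filter (fun x => x <= m) pat _ _ _ _ lo) => /=; lia.
have [m_le_a | a_lt_m] := leqP m (nth 0 r i).
  by apply: (pattern1324_filter (fun x => m <= x) pat _ _ _ _ hi) => /=; lia.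
have atX p : p = size X -> nth 0 r p = m by move->.
have iX : i < size X by move: (atX i) (sideR i) (sideR l); lia.
have Xl : size X < l by move: (atX l) (sideL i) (sideL l); lia.
have [kX | Xk | kE] := ltngtP k (size X).
- have c_lt_m : nth 0 r j < m by move: (sideL i) (sideL j); lia.
  have patL : pattern1324_at r i j k (size X) by split; split; rewrite ?rX; lia.
  by apply: (pattern1324_filter (fun x => x <= m) patL _ _ _ _ lo) => /=; rewrite ?rX; lia.
- have m_lt_b : m < nth 0 r k by move: (sideR k) (sideR l); lia.
  have Xj : size X < j by move: (atX j) (sideL i) (sideL j); lia.
  have patH : pattern1324_at r (size X) j k l by split; split; rewrite ?rX; lia.
  by apply: (pattern1324_filter (fun x => m <= x) patH _ _ _ _ hi) => /=; rewrite ?rX; lia.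
- by move: kj; rewrite kE rX; move: (sideL i) (sideL j); lia.
Qed.

Lemma perm_iota_interior n A B C :
  perm_eq (A ++ 1 :: B ++ n :: C) (iota 1 n) -> all (fun x => 1 < x < n) (A ++ B ++ C).
Proof.
move=> perm_s; have perm_ends : perm_eq (A ++ 1 :: B ++ n :: C) (1 :: n :: A ++ B ++ C).
  by apply/permP => p; rewrite /= !count_cat /= count_cat /=; lia.
have := perm_uniq perm_ends; rewrite (perm_uniq perm_s) iota_uniq /= inE.
move=> /esym/and3P[/norP[_ one_notin] n_notin _].
apply/allP => x x_in; have : x \in iota 1 n.
  by rewrite -(perm_mem perm_s) (perm_mem perm_ends) !inE x_in !orbT.
have : x != 1 by apply: contraNneq one_notin => <-.
have : x != n by apply: contraNneq n_notin => <-.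
by rewrite mem_iota; lia.
Qed.

Section Glue.

Variables (m l : nat) (pi1 tau1 pi2 th2 tau2 : seq nat).
Hypotheses (m_ge2 : 2 <= m) (l_ge2 : 2 <= l).
Hypothesis perm1 : perm_eq (pi1 ++ 1 :: m :: tau1) (iota 1 m).
Hypothesis perm2 : perm_eq (pi2 ++ 1 :: th2 ++ l :: tau2) (iota 1 l).

Local Notation hat := (map (addn (m - 1))).
Local Notation glued :=
  (hat pi2 ++ pi1 ++ [:: 1; m] ++ hat th2 ++ [:: l + m - 1] ++ hat tau2 ++ tau1).

Let interior1 : all (fun x => 1 < x < m) pi1 && all (fun x => 1 < x < m) tau1.
Proof. by rewrite -all_cat; apply: (@perm_iota_interior m pi1 [::] tau1). Qed.

Let interior2 : [&& all (fun x => 1 < x < l) pi2, all (fun x => 1 < x < l) th2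
                  & all (fun x => 1 < x < l) tau2].
Proof. by rewrite -!all_cat; apply: perm_iota_interior. Qed.

Let hat_interior t : all (fun y => 1 < y < l) t -> {in hat t, forall x, m < x < l + m - 1}.
Proof. by move=> /allP t_b _ /mapP[y /t_b y_b ->]; lia. Qed.

Lemma filter_le_glued : [seq x <- glued | x <= m] = pi1 ++ 1 :: m :: tau1.
Proof.
have drop_hat t : all (fun y => 1 < y < l) t -> [seq x <- hat t | x <= m] = [::].
  move=> /hat_interior t_b; rewrite -(filter_pred0 (hat t)).
  by apply: eq_in_filter => x /t_b /=; lia.
have keep t : all (fun y => 1 < y < m) t -> [seq x <- t | x <= m] = t.
  by move=> /allP t_b; apply/all_filterP/allP => x /t_b; lia.
case/andP: interior1 => pi1_b tau1_b; case/and3P: interior2 => pi2_b th2_b tau2_b.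
rewrite !filter_cat /= !drop_hat // !keep // leqnn.
have -> : (l + m - 1 <= m) = false by lia.
by rewrite (ltnW m_ge2).
Qed.

Lemma filter_ge_glued :
  [seq x <- glued | m <= x] = hat (pi2 ++ 1 :: th2 ++ l :: tau2).
Proof.
have keep_hat t : all (fun y => 1 < y < l) t -> [seq x <- hat t | m <= x] = hat t.
  by move=> /hat_interior t_b; apply/all_filterP/allP => x /t_b; lia.
have drop t : all (fun y => 1 < y < m) t -> [seq x <- t | m <= x] = [::].
  move=> /allP t_b; rewrite -(filter_pred0 t).
  by apply: eq_in_filter => x /t_b /=; lia.
case/andP: interior1 => pi1_b tau1_b; case/and3P: interior2 => pi2_b th2_b tau2_b.
rewrite !filter_cat /= !keep_hat // !drop // leqnn map_cat /= map_cat /=.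
have -> : (m <= 1) = false by lia.
have -> : (m <= l + m - 1) = true by lia.
have -> : m - 1 + 1 = m by lia.
have -> : m - 1 + l = l + m - 1 by lia.
by rewrite cats0.
Qed.

Lemma perm_glued : perm_eq glued (iota 1 (l + m - 1)).
Proof.
have split_m : perm_eq (m :: glued)
    ((pi1 ++ 1 :: m :: tau1) ++ hat (pi2 ++ 1 :: th2 ++ l :: tau2)).
  rewrite map_cat /= map_cat /=.
  have -> : m - 1 + 1 = m by lia.
  have -> : m - 1 + l = l + m - 1 by lia.
  by apply/permP => p; rewrite /=; do !rewrite count_cat /=; lia.
have hat_iota : hat (iota 1 l) = iota m l by rewrite -iotaDl subnK //; lia.
have iota_m : perm_eq (iota 1 m ++ iota m l) (m :: iota 1 (l + m - 1)).
  have -> : l + m - 1 = m + (l - 1) by lia.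
  have -> : iota m l = m :: iota (1 + m) (l - 1) by case: l l_ge2 => // l' _; rewrite /= subn1.
  by rewrite iotaD -cat1s perm_catCA.
rewrite -(perm_cons m); apply: perm_trans split_m _; apply: perm_trans iota_m.
by rewrite -hat_iota perm_cat // perm_map.
Qed.

Lemma avoids1324_glued :
  avoids1324 (pi1 ++ 1 :: m :: tau1) -> avoids1324 (pi2 ++ 1 :: th2 ++ l :: tau2) ->
  avoids1324 glued.
Proof.
move=> avoid1 avoid2.
case/andP: interior1 => pi1_b tau1_b; case/and3P: interior2 => pi2_b th2_b tau2_b.
have high t : all (fun y => 1 < y < l) t -> all (fun x => m < x) (hat t).
  by move=> /hat_interior t_b; apply/allP => x /t_b; lia.
have low t : all (fun y => 1 < y < m) t -> all (fun x => x < m) t.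
  by move=> /allP t_b; apply/allP => x /t_b; lia.
have split_m : glued = (hat pi2 ++ pi1 ++ [:: 1]) ++ m :: hat th2 ++ l + m - 1 :: hat tau2 ++ tau1.
  by rewrite -!catA.
rewrite split_m; apply: avoids1324_high_low.
- exists (hat pi2), (pi1 ++ [:: 1]); split=> //.
  by rewrite high // all_cat low //= andbT; lia.
- exists (hat th2 ++ l + m - 1 :: hat tau2), tau1; split; first by rewrite -catA.
  by rewrite all_cat /= !high // low //=; lia.
- by rewrite -split_m filter_le_glued.
- by rewrite -split_m filter_ge_glued; apply: avoids1324_map_addn.
Qed.

Lemma index_glued : index (l + m - 1) glued = index 1 glued + (size th2).+2.
Proof.
case/andP: interior1 => pi1_b tau1_b; case/and3P: interior2 => pi2_b th2_b tau2_b.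
have notin_hat t x : all (fun y => 1 < y < l) t -> x <= m \/ l + m - 1 <= x ->
    (x \in hat t) = false.
  by move=> /hat_interior t_b x_out; apply/negbTE/negP => /t_b; lia.
have notin_pi1 x : x <= 1 \/ m <= x -> (x \in pi1) = false.
  by move=> x_out; apply/negbTE/negP => /(allP pi1_b); lia.
have [n_ne1 n_nem] : (l + m - 1 == 1) = false /\ (l + m - 1 == m) = false by lia.
rewrite !index_cat !(notin_hat _ _ pi2_b) ?notin_pi1; try lia.
rewrite /= !inE n_ne1 n_nem eqxx (notin_hat _ _ th2_b) /= ?size_map; lia.
Qed.

End Glue.

Lemma cat_take_index2 {T : eqType} {s : seq T} x {y} :
  y \in s -> index x s < index y s ->
  s = take (index x s) s ++ x :: drop (index x s).+1 (take (index y s) s)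
        ++ y :: drop (index y s).+1 s.
Proof.
move=> y_in lt_xy; have y_lt : index y s < size s by rewrite index_mem.
have x_in : x \in s by rewrite -index_mem (ltn_trans lt_xy y_lt).
rewrite -{1}(cat_take_drop (index y s) s) (drop_nth y y_lt) nth_index //.
rewrite -{1}(cat_take_drop (index x s) (take (index y s) s)) take_takel ?(ltnW lt_xy) //.
by rewrite (drop_nth x) ?size_takel ?(ltnW y_lt) // nth_take // nth_index // -catA.
Qed.

Lemma cat_take_index_succ {T : eqType} {s : seq T} x {y} :
  y \in s -> index y s = (index x s).+1 ->
  s = take (index x s) s ++ x :: y :: drop (index x s).+2 s.
Proof.
move=> y_in index_y; rewrite {1}(cat_take_index2 x y_in) index_y ?ltnSn //.
by rewrite [drop _ (take _ _)]drop_oversize // size_take_min geq_minl.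
Qed.

Theorem mainTheorem2 (m l k : nat) (s1 s2 : seq nat) :
  2 <= m -> 2 <= l -> 1 <= k ->
  S_prec m 1 1 s1 -> S_prec l k 1 s2 ->
  S_prec (l + m - 1) k.+1 1 (odot s1 s2).
Proof.
move=> m_ge2 l_ge2 k_ge1 [[perm1 avoid1] pos1 _] [[perm2 avoid2] pos2 _].
rewrite /pos in pos1 pos2; rewrite addn1 in pos1.
have size1 : size s1 = m by rewrite (perm_size perm1) size_iota.
have size2 : size s2 = l by rewrite (perm_size perm2) size_iota.
have m_in : m \in s1 by rewrite (perm_mem perm1) mem_iota; lia.
have l_in : l \in s2 by rewrite (perm_mem perm2) mem_iota; lia.
have dec1 : s1 = take (index 1 s1) s1 ++ 1 :: m :: drop (index 1 s1).+2 s1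
  := cat_take_index_succ 1 m_in pos1.
have dec2 : s2 = take (index 1 s2) s2 ++ 1 :: drop (index 1 s2).+1 (take (index l s2) s2)
                   ++ l :: drop (index l s2).+1 s2.
  by apply: cat_take_index2 => //; rewrite pos2; lia.
rewrite /odot size1 size2.
set pi1 := take _ s1 in dec1 *; set tau1 := drop _ s1 in dec1 *.
set pi2 := take _ s2 in dec2 *; set th2 := drop _ (take _ s2) in dec2 *.
set tau2 := drop _ s2 in dec2 *.
have size_th2 : size th2 = k - 1.
  have l_lt : index l s2 < size s2 by rewrite index_mem.
  by rewrite /th2 size_drop size_takel ?(ltnW l_lt); lia.
rewrite dec1 in perm1 avoid1; rewrite dec2 in perm2 avoid2.
split; [split | | by move=> b; lia].
- exact: perm_glued.
- exact: avoids1324_glued.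
- by rewrite /pos index_glued // size_th2; lia.
Qed.
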